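(* Let $\phi,\alpha,\beta$ be arbitrary formulas (not necessarily sentences). Then $$\{\phi\vee(\alpha\to\beta^n): n\in\mathbb N\}\vDash\phi\vee(\alpha\to(\alpha\&\beta)).$$
   Context: Formulas are built from a countable predicate language (variables, constants, predicate symbols) with connectives $\to,\&$, constant $0$ and quantifiers $\forall,\exists$; abbreviations: $\phi\wedge\psi$ is $\phi\&(\phi\to\psi)$, $\phi\vee\psi$ is $((\phi\to\psi)\to\psi)\wedge((\psi\to\phi)\to\phi)$, $1$ is $0\to0$, $\beta^n$ is the $n$-fold $\&$-power of $\beta$. A continuous t-norm is a continuous binary operation $\cdot$ on $[0,1]$ that is commutative, associative, monotone in each argument and has $1$ as unit; it is regarded as the algebra $([0,1],\cdot,\to,\min,\max,0,1)$ where $\to$ is its residuum ($x\cdot y\le z$ iff $x\le y\to z$). For such a $\mathbf B$, a $\mathbf B$-structure $\mathbf M$ consists of a nonempty set $M$, an element $c^{\mathbf M}\in M$ for each constant $c$, and a function $P^{\mathbf M}:M^n\to[0,1]$ for each $n$-ary predicate $P$. For a valuation $v$ (a map from variables to $M$), $\|\phi\|^{\mathbf M,v}$ is defined inductively: $\|P(t_1,\dots,t_n)\|^{\mathbf M,v}=P^{\mathbf M}(t_1^{\mathbf M,v},\dots,t_n^{\mathbf M,v})$ (with $c^{\mathbf M,v}=c^{\mathbf M}$, $x^{\mathbf M,v}=v(x)$), $\|0\|=0$, $\&$ and $\to$ are interpreted by $\cdot$ and its residuum, $\|\forall x\psi\|^{\mathbf M,v}=\inf\{\|\psi\|^{\mathbf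 M,w}:w\equiv_x v\}$ and $\|\exists x\psi\|^{\mathbf M,v}=\sup\{\|\psi\|^{\mathbf M,w}:w\equiv_x v\}$, where $w\equiv_x v$ means $w$ agrees with $v$ except possibly at $x$. $\mathbf M$ is a model of $\phi$ if $\|\phi\|^{\mathbf M,v}=1$ for every valuation $v$, and a model of a set $\Gamma$ if it is a model of each member. $\Gamma\vDash\phi$ means: for every continuous t-norm $\mathbf B$ and every $\mathbf B$-structure $\mathbf M$, if $\mathbf M$ is a model of $\Gamma$ then $\mathbf M$ is a model of $\phi$. *)

From Stdlib Require Import Reals.
From mathcomp Require Import all_boot.
From mathcomp Require Import classical_sets reals Rstruct.

Set Implicit Arguments.
Unset Strict Implicit.
Unset Printing Implicit Defensive.

Section Language.
Variables (C P : countType) (ar : P -> nat).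

Inductive term : Type :=
  | Var : nat -> term
  | Cst : C -> term.

Inductive formula : Type :=
  | Atom : forall p : P, ('I_(ar p) -> term) -> formula
  | Zero : formula
  | Imp : formula -> formula -> formula
  | Conj : formula -> formula -> formula
  | All : nat -> formula -> formula
  | Ex : nat -> formula -> formula.

Definition One : formula := Imp Zero Zero.
Definition Wedge (a b : formula) : formula := Conj a (Imp a b).
Definition Vee (a b : formula) : formula :=
  Wedge (Imp (Imp a b) b) (Imp (Imp b a) a).
Fixpoint Pow (b : formula) (n : nat) : formula :=
  match n with
  | 0 => One
  | 1 => b
  | S m => Conj b (Pow b m)
  end.

Local Open Scope R_scope.

Definition unit01 (x : R) : Prop := 0 <= x <= 1.

Definition is_cont_tnorm (t : R -> R -> R) : Prop :=
  (forall x y, unit01 x -> unit01 y -> unit01 (t x y)) /\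
  (forall x y, unit01 x -> unit01 y -> t x y = t y x) /\
  (forall x y z, unit01 x -> unit01 y -> unit01 z -> t x (t y z) = t (t x y) z) /\
  (forall x y z, unit01 x -> unit01 y -> unit01 z -> x <= y -> t x z <= t y z) /\
  (forall x, unit01 x -> t x 1 = x) /\
  (forall x y, unit01 x -> unit01 y -> forall eps, 0 < eps ->
     exists delta, 0 < delta /\
       forall x' y', unit01 x' -> unit01 y' ->
         Rabs (x - x') < delta -> Rabs (y - y') < delta ->
         Rabs (t x y - t x' y') < eps).

Definition resid (t : R -> R -> R) (x y : R) : R :=
  sup (fun z : R => unit01 z /\ t x z <= y).

Record structure : Type := Structure {
  dom : Type;
  dom_elt : dom;                                     (* nonempty *)
  cst_i : C -> dom;
  pred_i : forall p : P, ('I_(ar p) -> dom) -> R;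
  pred_i01 : forall p (xs : 'I_(ar p) -> dom), unit01 (pred_i xs)
}.

Definition tm_eval (M : structure) (v : nat -> dom M) (s : term) : dom M :=
  match s with Var n => v n | Cst c => cst_i M c end.

Definition upd (M : structure) (v : nat -> dom M) (x : nat) (m : dom M) :
  nat -> dom M := fun n => if n == x then m else v n.

Fixpoint eval (t : R -> R -> R) (M : structure) (v : nat -> dom M)
  (f : formula) : R :=
  match f with
  | Atom p ts => pred_i (s:=M) (p:=p) (fun i => @tm_eval M v (ts i))
  | Zero => 0
  | Imp a b => resid t (@eval t M v a) (@eval t M v b)
  | Conj a b => t (@eval t M v a) (@eval t M v b)
  | All x a => inf (fun r : R => exists m : dom M, r = @eval t M (@upd M v x m) a)
  | Ex x a => sup (fun r : R => exists m : dom M, r = @eval t M (@upd M v x m) a)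
  end.

Definition model_of (t : R -> R -> R) (M : structure) (f : formula) : Prop :=
  forall v : nat -> dom M, @eval t M v f = 1.

Definition entails (Gamma : formula -> Prop) (phi : formula) : Prop :=
  forall t : R -> R -> R, is_cont_tnorm t ->
  forall M : structure,
    (forall g, Gamma g -> model_of t M g) -> model_of t M phi.

End Language.

(* If [a <= b^n] for all [n], let [c] be the infimum of the powers [b^n]; by
   continuity [b * c = c].  Since [a <= c = c * 1] and [0 = c * 0], the
   intermediate value theorem writes [a = c * w], whence
   [a * b = (b * c) * w = c * w = a].  Applied to [a = ||alpha||] and
   [b = ||beta||] this turns [alpha -> beta^n = 1] for all [n] into
   [alpha -> alpha & beta = 1]; and a disjunction [phi \/ psi] evaluates to
   [1] exactly when one of the disjuncts does. *)
From Stdlib Require Import Reals Lra.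
From mathcomp Require Import all_boot.
From mathcomp Require Import classical_sets reals Rstruct.
Local Open Scope R_scope.

Section SupInf.
Context {E : set R}.

Lemma sup_upper_boundR {B x} : (forall z, E z -> z <= B) -> E x -> x <= sup E.
Proof.
move=> hB Ex; apply/RleP/sup_upper_bound => //.
by split; [exists x | exists B => z /hB /RleP].
Qed.

Lemma ge_supR {B} : (exists x, E x) -> (forall z, E z -> z <= B) -> sup E <= B.
Proof. by move=> hE hB; apply/RleP/ge_sup => // z /hB /RleP. Qed.

Lemma sup_adherentR {B} eps : (exists x, E x) -> (forall z, E z -> z <= B) ->
  0 < eps -> exists2 e, E e & sup E - eps < e.
Proof.
move=> hE hB /RltP he.
have [|e Ee /RltP] := sup_adherent (E := E) he; last by exists e.
by split => //; exists B => z /hB /RleP.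
Qed.

Lemma ge_infR {B x} : (forall z, E z -> B <= z) -> E x -> inf E <= x.
Proof. by move=> hB Ex; apply/RleP/ge_inf => //; exists B => z /hB /RleP. Qed.

Lemma lb_le_infR {x} : (exists y, E y) -> (forall z, E z -> x <= z) -> x <= inf E.
Proof. by move=> hE hB; apply/RleP/lb_le_inf => // z /hB /RleP. Qed.

Lemma inf_adherentR {B} eps : (exists x, E x) -> (forall z, E z -> B <= z) ->
  0 < eps -> exists2 e, E e & e < inf E + eps.
Proof.
move=> hE hB /RltP he.
have [|e Ee /RltP] := inf_adherent (E := E) he; last by exists e.
by split => //; exists B => z /hB /RleP.
Qed.

Lemma sup_unit01 : (exists x, E x) -> (forall z, E z -> unit01 z) -> unit01 (sup E).
Proof.
move=> [x Ex] h01; have [x0 _] := h01 x Ex; split.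
- by apply: Rle_trans x0 _; apply: (sup_upper_boundR (B := 1)) Ex => z /h01 [].
- by apply: ge_supR; [exists x | move=> z /h01 []].
Qed.

Lemma inf_unit01 : (exists x, E x) -> (forall z, E z -> unit01 z) -> unit01 (inf E).
Proof.
move=> [x Ex] h01; have [_ x1] := h01 x Ex; split.
- by apply: lb_le_infR; [exists x | move=> z /h01 []].
- by apply: Rle_trans _ x1; apply: (ge_infR (B := 0)) Ex => z /h01 [].
Qed.

End SupInf.

Lemma unit01_0 : unit01 0. Proof. rewrite /unit01; lra. Qed.
Lemma unit01_1 : unit01 1. Proof. rewrite /unit01; lra. Qed.

(* Composing with [clamp] turns [t c] into a continuous function on all of [R],
   as the intermediate value theorem [IVT_cor] requires. *)
Definition clamp (z : R) : R := Rmax 0 (Rmin 1 z).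

Lemma clamp_unit01 z : unit01 (clamp z).
Proof. rewrite /clamp /unit01 /Rmax /Rmin; repeat case: Rle_dec; lra. Qed.

Lemma clamp_id z : unit01 z -> clamp z = z.
Proof. rewrite /clamp /unit01 /Rmax /Rmin; repeat case: Rle_dec; lra. Qed.

Lemma clamp_1lipschitz x y : Rabs (clamp x - clamp y) <= Rabs (x - y).
Proof.
rewrite /clamp /Rmax /Rmin.
case: (Rle_dec 1 x) => ?; case: (Rle_dec 1 y) => ?;
by repeat case: Rle_dec => ?; rewrite /Rabs; repeat case: Rcase_abs => ?; lra.
Qed.

Section ContinuousTNorm.
Context {t : R -> R -> R} (Ht : is_cont_tnorm t).

Lemma tnorm_unit01 {x y} : unit01 x -> unit01 y -> unit01 (t x y).
Proof. by case: Ht => h _; apply: h. Qed.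

Lemma tnormC {x y} : unit01 x -> unit01 y -> t x y = t y x.
Proof. by case: Ht => _ [h _]; apply: h. Qed.

Lemma tnormA {x y z} : unit01 x -> unit01 y -> unit01 z -> t x (t y z) = t (t x y) z.
Proof. by case: Ht => _ [_ [h _]]; apply: h. Qed.

Lemma tnorm_monol {x y z} : unit01 x -> unit01 y -> unit01 z -> x <= y -> t x z <= t y z.
Proof. by case: Ht => _ [_ [_ [h _]]]; apply: h. Qed.

Lemma tnorm1 {x} : unit01 x -> t x 1 = x.
Proof. by case: Ht => _ [_ [_ [_ [h _]]]]; apply: h. Qed.

Lemma tnorm_continuous {x y} : unit01 x -> unit01 y -> forall eps, 0 < eps ->
  exists delta, 0 < delta /\ forall x' y', unit01 x' -> unit01 y' ->
    Rabs (x - x') < delta -> Rabs (y - y') < delta -> Rabs (t x y - t x' y') < eps.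
Proof. by case: Ht => _ [_ [_ [_ [_ h]]]]; apply: h. Qed.

Lemma tnorm_monor {x y z} : unit01 x -> unit01 y -> unit01 z -> y <= z -> t x y <= t x z.
Proof.
move=> hx hy hz le; rewrite (tnormC hx hy) (tnormC hx hz); exact: tnorm_monol.
Qed.

Lemma tnorm1l {y} : unit01 y -> t 1 y = y.
Proof. by move=> hy; rewrite (tnormC unit01_1 hy) tnorm1. Qed.

Lemma tnorm_lel {x y} : unit01 x -> unit01 y -> t x y <= x.
Proof.
move=> hx hy; rewrite -{2}(tnorm1 hx).
exact: tnorm_monor hx hy unit01_1 (proj2 hy).
Qed.

Lemma tnorm_ler {x y} : unit01 x -> unit01 y -> t x y <= y.
Proof. by move=> hx hy; rewrite (tnormC hx hy); exact: tnorm_lel. Qed.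

Lemma tnorm0 {x} : unit01 x -> t x 0 = 0.
Proof.
move=> hx; have := tnorm_ler hx unit01_0; have [] := tnorm_unit01 hx unit01_0; lra.
Qed.

Lemma tnorm_eq1 {x y} : unit01 x -> unit01 y -> t x y = 1 -> x = 1 /\ y = 1.
Proof.
move=> hx hy e; have := tnorm_lel hx hy; have := tnorm_ler hx hy.
by case: hx; case: hy; lra.
Qed.

Lemma tnorm_clamp_continuous {c} : unit01 c -> continuity (fun z => t c (clamp z)).
Proof.
move=> hc x eps heps.
have [d [hd Hd]] := tnorm_continuous hc (clamp_unit01 x) _ heps.
exists d; split => // y [_ hy]; rewrite /= /Rdist in hy *.
rewrite Rabs_minus_sym in hy; rewrite Rabs_minus_sym.
apply: Hd; rewrite ?Rminus_diag ?Rabs_R0 //; try exact: clamp_unit01.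
exact: Rle_lt_trans (clamp_1lipschitz _ _) hy.
Qed.

Lemma tnorm_divisible {c a} : unit01 c -> unit01 a -> a <= c ->
  exists2 w, unit01 w & t c w = a.
Proof.
move=> hc ha ac; pose f z := t c (clamp z) - a.
have f_cont : continuity f.
  exact: continuity_minus (tnorm_clamp_continuous hc) (continuity_const _ _).
have f0 : f 0 = - a by rewrite /f clamp_id ?tnorm0 //; [ring | exact: unit01_0].
have f1 : f 1 = c - a by rewrite /f clamp_id ?tnorm1 //; exact: unit01_1.
have [w [hw fw]] := IVT_cor f 0 1 f_cont Rle_0_1 ltac:(rewrite f0 f1; case: ha; nra).
by exists w => //; move: fw; rewrite /f clamp_id //; lra.
Qed.

Lemma resid_unit01 {x y} : unit01 x -> unit01 y -> unit01 (resid t x y).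
Proof.
move=> hx hy; apply: sup_unit01 => [|z [] //].
by exists 0; split; [exact: unit01_0 | rewrite tnorm0 //; case: hy].
Qed.

(* The residuum is a supremum, not a maximum, so [resid t x y = 1] only gives
   elements [z] of the defining set arbitrarily close to [1]; continuity then
   yields [x = t x 1 <= y]. *)
Lemma resid_eq1 {x y} : unit01 x -> unit01 y -> resid t x y = 1 <-> x <= y.
Proof.
move=> hx hy; split => [e | le].
- apply: Rnot_lt_le => lt.
  have [d [hd Hd]] := tnorm_continuous hx unit01_1 (x - y) ltac:(lra).
  pose E z := unit01 z /\ t x z <= y.
  have E0 : E 0 by split; [exact: unit01_0 | rewrite tnorm0 //; case: hy].
  have E_le1 z : E z -> z <= 1 by move=> [[]].
  have [z [hz hzy] lt_z] := sup_adherentR d (ex_intro _ 0 E0) E_le1 hd.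
  rewrite -/(resid t x y) e in lt_z.
  have /Rabs_def2 := Hd x z hx hz ltac:(rewrite Rminus_diag Rabs_R0; lra)
    ltac:(apply: Rabs_def1; case: hz; lra).
  by rewrite tnorm1 //; lra.
- apply: Rle_antisym; first by case: (resid_unit01 hx hy).
  apply: (sup_upper_boundR (B := 1)) => [z [[]] //|].
  by split; [exact: unit01_1 | rewrite tnorm1].
Qed.

Lemma resid1l {y} : unit01 y -> resid t 1 y = y.
Proof.
move=> hy; apply: Rle_antisym.
- apply: ge_supR => [|z [hz]]; last by rewrite tnorm1l.
  by exists y; split => //; rewrite tnorm1l //; apply: Rle_refl.
- apply: (sup_upper_boundR (B := 1)) => [z [[]] //|].
  by split => //; rewrite tnorm1l //; apply: Rle_refl.
Qed.

Lemma resid_refl {x} : unit01 x -> resid t x x = 1.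
Proof. by move=> hx; apply/resid_eq1 => //; apply: Rle_refl. Qed.

Lemma resid_x1 {x} : unit01 x -> resid t x 1 = 1.
Proof. by move=> hx; apply/resid_eq1 => //; [exact: unit01_1 | case: hx]. Qed.

(* [eval t v (Vee a b)] unfolds to [vee (eval t v a) (eval t v b)]. *)
Definition vee (x y : R) : R :=
  t (resid t (resid t x y) y)
    (resid t (resid t (resid t x y) y) (resid t (resid t y x) x)).

Lemma vee_eq1 {x y} : unit01 x -> unit01 y -> vee x y = 1 <-> x = 1 \/ y = 1.
Proof.
move=> hx hy; rewrite /vee.
have hxy := resid_unit01 hx hy; have hyx := resid_unit01 hy hx.
have hX := resid_unit01 hxy hy; have hY := resid_unit01 hyx hx.
split.
- move=> /(tnorm_eq1 hX (resid_unit01 hX hY)) [eX].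
  rewrite (resid_eq1 hX hY) eX => /(Rle_antisym _ _ (proj2 hY)).
  move: eX; rewrite (resid_eq1 hyx hx) (resid_eq1 hxy hy) => yx_x xy_y.
  case: (Rle_dec x y) => [le | /Rnot_le_lt lt].
  + by right; have := proj2 (resid_eq1 hx hy) le; case: hy; lra.
  + by left; have := proj2 (resid_eq1 hy hx) (Rlt_le _ _ lt); case: hx; lra.
- have r11 := resid_refl unit01_1.
  case=> ->.
  + by rewrite (resid1l hy) (resid_refl hy) (resid_x1 hy) !r11 (tnorm1l unit01_1).
  + by rewrite (resid_x1 hx) (resid1l hx) (resid_refl hx) !r11 (tnorm1l unit01_1).
Qed.

Fixpoint tpow (b : R) (n : nat) : R :=
  if n is m.+1 then t b (tpow b m) else 1.

Lemma tpow_unit01 {b} n : unit01 b -> unit01 (tpow b n).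
Proof. by move=> hb; elim: n => [|n IH] /=; [exact: unit01_1 | exact: tnorm_unit01]. Qed.

Definition tpow_inf (b : R) : R := inf (fun r => exists n, r = tpow b n).

Lemma tpow_inf_le {b} n : unit01 b -> tpow_inf b <= tpow b n.
Proof.
move=> hb; apply: (ge_infR (B := 0)); last by exists n.
by move=> z [m ->]; case: (tpow_unit01 m hb).
Qed.

Lemma le_tpow_inf {a b} : (forall n, a <= tpow b n) -> a <= tpow_inf b.
Proof. by move=> a_le; apply: lb_le_infR => [|z [n ->]]; [exists 1, 0%N | exact: a_le]. Qed.

Lemma tpow_inf_unit01 {b} : unit01 b -> unit01 (tpow_inf b).
Proof.
move=> hb; split; last exact: tpow_inf_le 0%N hb.
by apply: le_tpow_inf => n; case: (tpow_unit01 n hb).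
Qed.

(* Continuity of [t] lets [b * _] commute with the infimum of the powers. *)
Lemma tnorm_tpow_inf {b} : unit01 b -> t b (tpow_inf b) = tpow_inf b.
Proof.
move=> hb; have hc := tpow_inf_unit01 hb; apply: Rle_antisym.
  apply: le_tpow_inf => -[|n] /=; first by case: (tnorm_unit01 hb hc).
  by apply: tnorm_monor (tpow_inf_le n hb) => //; exact: tpow_unit01.
apply: Rnot_lt_le => lt.
have [d [hd Hd]] := tnorm_continuous hb hc (tpow_inf b - t b (tpow_inf b)) ltac:(lra).
have ne : exists r, exists m, r = tpow b m by exists 1, 0%N.
have lb z : (exists m, z = tpow b m) -> 0 <= z by move=> [m ->]; case: (tpow_unit01 m hb).
have [_ [n ->] lt_n] := inf_adherentR d ne lb hd.
rewrite -/(tpow_inf b) in lt_n.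
have le0 := tpow_inf_le n hb; have /= le1 := tpow_inf_le n.+1 hb.
have /Rabs_def2 := Hd b (tpow b n) hb (tpow_unit01 n hb)
  ltac:(rewrite Rminus_diag Rabs_R0; lra) ltac:(apply: Rabs_def1; lra).
lra.
Qed.

Lemma le_tnorm_of_le_tpow {a b} : unit01 a -> unit01 b ->
  (forall n, a <= tpow b n) -> a <= t a b.
Proof.
move=> ha hb /le_tpow_inf a_le; have hc := tpow_inf_unit01 hb.
have [w hw <-] := tnorm_divisible hc ha a_le.
rewrite (tnormC (tnorm_unit01 hc hw) hb) (tnormA hb hc hw) (tnorm_tpow_inf hb).
exact: Rle_refl.
Qed.

Section Semantics.
Context {C P : countType} {ar : P -> nat} {M : structure C ar}.

Lemma eval_unit01 (f : formula C ar) (v : nat -> dom M) : unit01 (eval t v f).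
Proof.
elim: f v => [p ts||a IHa b IHb|a IHa b IHb|x a IHa|x a IHa] v /=.
- exact: pred_i01.
- exact: unit01_0.
- exact: resid_unit01.
- exact: tnorm_unit01.
- by apply: inf_unit01 => [|z [m ->] //]; exists (eval t (upd v x (dom_elt M)) a), (dom_elt M).
- by apply: sup_unit01 => [|z [m ->] //]; exists (eval t (upd v x (dom_elt M)) a), (dom_elt M).
Qed.

Lemma eval_Pow (f : formula C ar) (v : nat -> dom M) n :
  eval t v (Pow f n) = tpow (eval t v f) n.
Proof.
elim: n => [|[|n] IH] /=; last by rewrite IH.
- exact: resid_refl unit01_0.
- by rewrite tnorm1 //; exact: eval_unit01.
Qed.

End Semantics.
End ContinuousTNorm.

Theorem mainTheorem6 (C P : countType) (ar : P -> nat)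
  (phi alpha beta : @formula C P ar) :
  entails (fun g => exists n : nat, g = Vee phi (Imp alpha (Pow beta n)))
          (Vee phi (Imp alpha (Conj alpha beta))).
Proof.
move=> t Ht M Hg v.
have hpow n : @vee t (eval t v phi) (resid t (eval t v alpha) (@tpow t (eval t v beta) n)) = 1.
  by rewrite -(eval_Pow Ht); apply: (Hg _ (ex_intro _ n erefl) v).
change (@vee t (eval t v phi) (resid t (eval t v alpha) (t (eval t v alpha) (eval t v beta))) = 1).
have hp := eval_unit01 Ht phi v; have ha := eval_unit01 Ht alpha v.
have hb := eval_unit01 Ht beta v; have hab := tnorm_unit01 Ht ha hb.
apply/(vee_eq1 Ht hp (resid_unit01 Ht ha hab)).
have [|p_ne1] := Req_dec (eval t v phi) 1; [by left | right].
apply/(resid_eq1 Ht ha hab)/(le_tnorm_of_le_tpow Ht ha hb) => n.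
have hbn := tpow_unit01 Ht n hb.
have /(vee_eq1 Ht hp (resid_unit01 Ht ha hbn)) [//|] := hpow n.
by move/(resid_eq1 Ht ha hbn).
Qed.
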